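(* Let $H$ and $\tilde H$ be two dephased $d\times d$ complex Hadamard matrices with $\tilde H=D_1P_1HP_2D_2$, where $D_1,D_2$ are diagonal unitary matrices and $P_1,P_2$ are permutation matrices. Let $\{C_1,C_2\}$ be an ER pair of columns of $H$, and let $\tilde C_1,\tilde C_2$ be the columns of $\tilde H$ into which the columns $C_1,C_2$ of $H$ are carried by this equivalence (i.e. by the column permutation $P_2$). Then $\{\tilde C_1,\tilde C_2\}$ is an ER pair of columns of $\tilde H$.
   Context: A $d\times d$ complex Hadamard matrix has unimodular entries and pairwise orthogonal columns; it is dephased if its first row and first column consist of $1$'s. Two distinct columns $C_A,C_B$ of a complex Hadamard matrix form an ER pair if $\overline{(C_A)_j}(C_B)_j\in\{1,-1\}$ for every $j=0,\dots,d-1$. *)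

(* Complex numbers are modelled as R[i] = complex R for R : realType
   (mathcomp-real-closed complex, a numClosedFieldType; conjugation is Num.conj). *)
From HB Require Import structures.
From mathcomp Require Import all_boot all_order all_algebra all_fingroup.
From mathcomp Require Import complex reals.
Set Implicit Arguments. Unset Strict Implicit. Unset Printing Implicit Defensive.
Import Order.TTheory GRing.Theory Num.Theory.
Local Open Scope ring_scope.

Section Defs.
Variable C : numClosedFieldType.
Variable d : nat.

Definition complex_hadamard (H : 'M[C]_d) : Prop :=
  (forall i j, `|H i j| = 1) /\
  (forall k l : 'I_d, k != l -> \sum_(j < d) (H j k)^* * H j l = 0).

Definition dephased (H : 'M[C]_d) : Prop :=
  (forall i j : 'I_d, nat_of_ord i = 0%N -> H i j = 1) /\
  (forall i j : 'I_d, nat_of_ord j = 0%N -> H i j = 1).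

Definition diag_unitary (D : 'M[C]_d) : Prop :=
  exists v : 'rV[C]_d, (forall j, `|v 0 j| = 1) /\ D = diag_mx v.

Definition ER_pair (H : 'M[C]_d) (a b : 'I_d) : Prop :=
  a != b /\ forall j : 'I_d, (H j a)^* * H j b = 1 \/ (H j a)^* * H j b = -1.
End Defs.

(* Writing D1 = diag u and D2 = diag v, the entries of Ht in the columns s2 a, s2 b are
   u_j H_(s1 j, a) v_(s2 a) and u_j H_(s1 j, b) v_(s2 b).  Since |u_j| = 1, the product
   conj(Ht_(j, s2 a)) Ht_(j, s2 b) is c e_(s1 j), where c = conj(v_(s2 a)) v_(s2 b) does
   not depend on j and e_k = conj(H_(k, a)) H_(k, b) = ±1.  The first row of Ht is all
   ones, so c e_(s1 0) = 1 and c = e_(s1 0) = ±1; hence every c e_(s1 j) is ±1. *)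
From HB Require Import structures.
From mathcomp Require Import all_boot all_order all_algebra all_fingroup.
From mathcomp Require Import complex reals ring.
Set Implicit Arguments. Unset Strict Implicit. Unset Printing Implicit Defensive.
Import Order.TTheory GRing.Theory Num.Theory.
Local Open Scope ring_scope.

Section PlusMinusOne.
Variable R : pzRingType.

Definition pm1 (x : R) : Prop := x = 1 \/ x = -1.

Lemma pm1M (x y : R) : pm1 x -> pm1 y -> pm1 (x * y).
Proof.
by case=> ->; case=> ->; rewrite ?mulr1 ?mul1r ?mulrNN ?mulr1; [left|right|right|left].
Qed.

Lemma pm1_sqr (x : R) : pm1 x -> x * x = 1.
Proof. by case=> ->; rewrite ?mulrNN mulr1. Qed.

Lemma pm1_mul_eq1 (x y : R) : pm1 y -> x * y = 1 -> pm1 x.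
Proof. by move=> pm1y xy1; rewrite -[x]mulr1 -(pm1_sqr pm1y) mulrA xy1 mul1r. Qed.

End PlusMinusOne.

Lemma diag_perm_mxE (R : pzRingType) (d : nat) (H : 'M[R]_d) (u v : 'rV[R]_d) (s1 s2 : 'S_d) i j :
  (diag_mx u *m perm_mx s1 *m H *m perm_mx s2 *m diag_mx v) i (s2 j)
  = u 0 i * H (s1 i) j * v 0 (s2 j).
Proof.
rewrite mul_mx_diag mxE -!mulmxA mul_diag_mx mxE -row_permE.
rewrite -[perm_mx s2](congr1 perm_mx (invgK s2)) -col_permE !mxE.
by rewrite permK.
Qed.

Lemma conj_unimodular_scale (C : numClosedFieldType) (u x y v w : C) :
  `|u| = 1 -> (u * x * v)^* * (u * y * w) = v^* * w * (x^* * y).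
Proof.
move=> u1; have uu : u^* * u = 1 by rewrite -normCKC u1 expr1n.
rewrite !rmorphM /= -[RHS]mul1r -uu; ring.
Qed.

Theorem proposition1 (R : realType) (d : nat) (H Ht D1 D2 : 'M[R[i]]_d)
    (s1 s2 : 'S_d) (a b : 'I_d) :
  complex_hadamard H -> dephased H ->
  complex_hadamard Ht -> dephased Ht ->
  diag_unitary D1 -> diag_unitary D2 ->
  Ht = D1 *m perm_mx s1 *m H *m perm_mx s2 *m D2 ->
  ER_pair H a b ->
  ER_pair Ht (s2 a) (s2 b).
Proof.
move=> _ _ _ [Ht_row0 _] [u [u1 ->]] [v [_ ->]] Ht_def [a_neq_b pm1H].
split; first by apply: contra a_neq_b => /eqP /perm_inj ->.
set c := (v 0 (s2 a))^* * v 0 (s2 b).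
have HtE j : (Ht j (s2 a))^* * Ht j (s2 b) = c * ((H (s1 j) a)^* * H (s1 j) b).
  by rewrite Ht_def !diag_perm_mxE conj_unimodular_scale.
have d_gt0 : (0 < d)%N := leq_ltn_trans (leq0n a) (ltn_ord a).
have pm1c : pm1 c.
  apply: pm1_mul_eq1 (pm1H (s1 (Ordinal d_gt0))) _.
  by rewrite -HtE (Ht_row0 _ (s2 a)) // (Ht_row0 _ (s2 b)) // conjC1 mulr1.
by move=> j; rewrite HtE; exact: pm1M pm1c (pm1H (s1 j)).
Qed.
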